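(* Let $n_z\ge 2$ and let $\underline Z=\{Z_j: j=1,\dots,n_z\}$ be a set of real numbers with $0\in\underline Z$. Then the hybrid knowledge gradient satisfies $\mathrm{KG}_h(x)\ge 0$ for all $x\in X$, and if $x$ is sampled infinitely often then $\mathrm{KG}_h(x)=0$ (in the limit as the number of samples at $x$ tends to infinity).
   Context: Global optimization setting: an unknown function $f:X\to\mathbb{R}$ is observed with independent Gaussian noise of variance $\sigma_0^2>0$. After $n$ observations, a Gaussian process model has posterior mean $\mu^n$ and posterior covariance $k^n$. For a candidate sample location $x^{n+1}$ define $\tilde\sigma(x';x^{n+1})=k^n(x',x^{n+1})/\sqrt{k^n(x^{n+1},x^{n+1})+\sigma_0^2}$, so that the posterior mean after observing $y^{n+1}$ at $x^{n+1}$ is $\mu^{n+1}(x')=\mu^n(x')+\tilde\sigma(x';x^{n+1})Z$ with $Z\sim\mathcal N(0,1)$. Hybrid knowledge gradient: given fixed values $Z_1,\dots,Z_{n_z}$, for each $j$ let $x^*_j\in\operatorname{arg\,max}_{x'\in X}\big(\mu^n(x')+\tilde\sigma(x';x^{n+1})Z_j\big)$ and let $X^*_d=\{x^*_1,\dots,x^*_{n_z}\}$. With $\underline\mu^*=\mu^n(X^*_d)\in\mathbb{R}^{n_z}$ and $\underline{\tilde\sigma}^*(x^{n+1})=\tilde\sigma(X^*_d;x^{n+1})\in\mathbb{R}^{n_z}$ (componentwise), $$\mathrm{KG}_h(x^{n+1})=\mathbb{E}_{Z\sim\mathcal N(0,1)}\Big[\max_{j}\big(\underline\mu^*_j+\underline{\tilde\sigma}^*_j(x^{n+1})Z\big)\Big]-\max_j\underline\mu^*_j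 .$$ *)

From HB Require Import structures.
From mathcomp Require Import all_boot all_order all_algebra.
From mathcomp Require Import all_classical all_reals all_analysis.
Set Implicit Arguments. Unset Strict Implicit. Unset Printing Implicit Defensive.
Import Order.TTheory GRing.Theory Num.Theory.
Local Open Scope ring_scope.

Section GP.
Context {R : realType} {X : Type}.

Definition sigt (k : X -> X -> R) (s0 : R) (xn1 : X) (x' : X) : R :=
  k x' xn1 / Num.sqrt (k xn1 xn1 + s0 ^+ 2).

Definition gp_update (s0 : R) (mk : (X -> R) * (X -> X -> R)) (xo : X) (y : R)
  : (X -> R) * (X -> X -> R) :=
  let: (m, k) := mk in
  (fun a => m a + k a xo * (y - m xo) / (k xo xo + s0 ^+ 2),
   fun a b => k a b - k a xo * k xo b / (k xo xo + s0 ^+ 2)).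

(* posterior (mu^n, k^n) after the n observations (xs 0, ys 0), ..., (xs n.-1, ys n.-1) *)
Fixpoint gp_post (mu0 : X -> R) (k0 : X -> X -> R) (s0 : R)
  (xs : nat -> X) (ys : nat -> R) (n : nat) : (X -> R) * (X -> X -> R) :=
  match n with
  | 0 => (mu0, k0)
  | n'.+1 => gp_update s0 (gp_post mu0 k0 s0 xs ys n') (xs n') (ys n')
  end.

Definition is_argmax (mu : X -> R) (k : X -> X -> R) (s0 : R) (xn1 : X) (z : R)
  (x' : X) : Prop :=
  forall y : X, mu y + sigt k s0 xn1 y * z <= mu x' + sigt k s0 xn1 x' * z.

(* Hybrid knowledge gradient, given the discretized maximizers xstar : 'I_nz -> X
   (xstar j a maximizer for Z_j). Expectation w.r.t. Z ~ N(0,1). *)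
Definition KGh (nz : nat) (mu : X -> R) (k : X -> X -> R) (s0 : R)
  (xstar : 'I_nz -> X) (xn1 : X) : \bar R :=
  ((\int[normal_prob 0 1]_(z in [set: R])
      \big[Order.max/-oo]_(j < nz) (mu (xstar j) + sigt k s0 xn1 (xstar j) * z)%:E)
   - \big[Order.max/-oo]_(j < nz) (mu (xstar j))%:E)%E.

Definition psd_kernel (k : X -> X -> R) : Prop :=
  (forall a b, k a b = k b a) /\
  forall (m : nat) (p : 'I_m -> X) (c : 'I_m -> R),
    0 <= \sum_(i < m) \sum_(j < m) c i * c j * k (p i) (p j).

End GP.

From HB Require Import structures.
From mathcomp Require Import all_boot all_order all_algebra.
From mathcomp Require Import all_classical all_reals all_analysis measurable_realfun.
From mathcomp Require Import ring lra.
Import Order.TTheory GRing.Theory Num.Theory.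
Import numFieldNormedType.Exports.
Set Implicit Arguments. Unset Strict Implicit. Unset Printing Implicit Defensive.
Local Open Scope ring_scope.
Local Open Scope classical_set_scope.

(* KG_h = E[max_j (mu_j + s_j Z)] - max_j mu_j with Z ~ N(0, 1). For j0 maximizing
   mu_j, the maximum dominates the affine function mu_j0 + s_j0 Z, whose mean is mu_j0,
   so KG_h >= 0; it is also at most mu_j0 + (max_j |s_j|) |Z|, so
   KG_h <= E|Z| max_j |s_j|. By Cauchy-Schwarz for the posterior kernel,
   |sigt(x'; x)| <= sqrt (B k^n(x, x)) / sigma_0 where B bounds the prior variance, and
   each observation at x adds 1 / sigma_0^2 to the posterior precision 1 / k^n(x, x).
   Sampling x infinitely often thus drives k^n(x, x), and with it KG_h(x), to 0. *)

Section psd_kernel.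
Context {R : realType} {X : Type}.
Implicit Types (k : X -> X -> R) (a b o : X).

Lemma psd_kernel_diag_ge0 k a : psd_kernel k -> 0 <= k a a.
Proof.
by move=> [_ psdk]; have := psdk 1%N (fun=> a) (fun=> 1); rewrite !big_ord1 !mul1r.
Qed.

Lemma psd_kernel_form2 k a b (u v : R) : psd_kernel k ->
  0 <= u * u * k a a + u * v * k a b + v * u * k b a + v * v * k b b.
Proof.
move=> [_ psdk]; have := psdk 2%N (fun i => if i == ord0 then a else b)
  (fun i => if i == ord0 then u else v).
by rewrite !big_ord_recr /= !big_ord0 !add0r /= !addrA.
Qed.

Lemma psd_kernel_CauchySchwarz k a b : psd_kernel k ->
  k a b ^+ 2 <= k a a * k b b.
Proof.
move=> psdk; have kba := psdk.1 b a.
have kaa := psd_kernel_diag_ge0 a psdk; have kbb := psd_kernel_diag_ge0 b psdk.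
have := psd_kernel_form2 a b (k b b) (- k a b) psdk.
(* this second form forces [k a b = 0] when [k b b = 0] *)
have := psd_kernel_form2 a b (k a b) (- ((k a a + 1) / 2)) psdk.
rewrite kba; have [->|kbb0] := eqVneq (k b b) 0; first by nra.
have : 0 < k b b by rewrite lt_neqAle eq_sym kbb0.
by nra.
Qed.

Lemma psd_kernel_normCS k a b : psd_kernel k ->
  `|k a b| <= Num.sqrt (k a a * k b b).
Proof.
by move=> psdk; rewrite -sqrtr_sqr ler_wsqrtr ?psd_kernel_CauchySchwarz.
Qed.

Lemma psd_kernel_extend k m (p : 'I_m -> X) (c : 'I_m -> R) o (t : R) :
  psd_kernel k ->
  0 <= \sum_(i < m) \sum_(j < m) c i * c j * k (p i) (p j)
       + 2 * t * \sum_(i < m) c i * k (p i) o + t * t * k o o.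
Proof.
move=> [ksym psdk].
pose p' i := if unlift ord_max i is Some j then p j else o.
pose c' i := if unlift ord_max i is Some j then c j else t.
have widenE (i : 'I_m) : widen_ord (leqnSn m) i = lift ord_max i.
  by apply: val_inj; rewrite /= /bump leqNgt ltn_ord.
have p'E (i : 'I_m) : p' (widen_ord (leqnSn m) i) = p i by rewrite widenE /p' liftK.
have c'E (i : 'I_m) : c' (widen_ord (leqnSn m) i) = c i by rewrite widenE /c' liftK.
have p'max : p' ord_max = o by rewrite /p' unlift_none.
have c'max : c' ord_max = t by rewrite /c' unlift_none.
suff <- : \sum_(i < m.+1) \sum_(j < m.+1) c' i * c' j * k (p' i) (p' j)
    = \sum_(i < m) \sum_(j < m) c i * c j * k (p i) (p j)
    + 2 * t * \sum_(i < m) c i * k (p i) o + t * t * k o o by exact: psdk.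
rewrite big_ord_recr /=; under eq_bigr do rewrite big_ord_recr /=.
rewrite big_ord_recr /= big_split /= p'max c'max -!addrA; congr (_ + _).
  by apply: eq_bigr => i _; apply: eq_bigr => j _; rewrite !p'E !c'E.
rewrite addrA; congr (_ + _); rewrite mulr_sumr -big_split.
by apply: eq_bigr => i _; rewrite /= !p'E !c'E (ksym o); ring.
Qed.

(* No condition on [s]: if [k o o + s ^+ 2 = 0] the update is the identity,
   as [x / 0 = 0]. *)
Lemma psd_kernel_condition k o (s : R) : psd_kernel k ->
  psd_kernel (fun a b => k a b - k a o * k o b / (k o o + s ^+ 2)).
Proof.
move=> psdk; have [ksym psdk'] := psdk; split.
  by move=> a b; rewrite ksym (ksym a o) (ksym o b) (mulrC (k o a)).
move=> m p c; set d := k o o + s ^+ 2.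
pose Q := \sum_(i < m) \sum_(j < m) c i * c j * k (p i) (p j).
pose L := \sum_(i < m) c i * k (p i) o.
have -> : \sum_(i < m) \sum_(j < m)
      c i * c j * (k (p i) (p j) - k (p i) o * k o (p j) / d) = Q - L ^+ 2 / d.
  rewrite /Q /L expr2 !mulr_suml -sumrB; apply: eq_bigr => i _.
  rewrite mulr_sumr !mulr_suml -sumrB; apply: eq_bigr => j _.
  by rewrite (ksym o (p j)); ring.
have Q0 : 0 <= Q by exact: psdk'.
have koo := psd_kernel_diag_ge0 o psdk.
have [d0|dn0] := eqVneq d 0; first by rewrite d0 invr0 mulr0 subr0.
have dpos : 0 < d by rewrite lt_neqAle eq_sym dn0 addr_ge0 ?sqr_ge0.
have kood : k o o <= d by rewrite lerDl sqr_ge0.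
(* weight [- L / d] makes the extended form bound [Q] below by [L^2 / d] *)
have := psd_kernel_extend p c o (- (L / d)) psdk; rewrite -/Q -/L.
set w := L / d; have -> : L = w * d by rewrite /w mulfVK.
have -> : (w * d) ^+ 2 / d = w * w * d by field.
have : 0 <= w * w * (d - k o o) by rewrite mulr_ge0 ?subr_ge0 // -expr2 sqr_ge0.
by nra.
Qed.

End psd_kernel.

(* Conditioning on one observation with noise variance [s2] adds [1 / s2] to the
   precision [1 / v]: the new variance is [v * s2 / (v + s2)]. *)
Lemma conditioned_var_precision {R : realFieldType} (v s2 c : R) :
  0 <= v -> 0 <= s2 -> v * c <= s2 -> (v - v * v / (v + s2)) * (c + 1) <= s2.
Proof.
move=> v0 s20 vc; have [d0|dn0] := eqVneq (v + s2) 0.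
  have v00 : v = 0 by lra.
  by rewrite v00 !mul0r subr0 mul0r; lra.
have dpos : 0 < v + s2 by rewrite lt_neqAle eq_sym dn0 addr_ge0.
have -> : v - v * v / (v + s2) = v * s2 / (v + s2) by field.
by rewrite mulrAC ler_pdivrMr //; nra.
Qed.

Section posterior.
Context {R : realType} {X : Type}.
Variables (mu0 : X -> R) (k0 : X -> X -> R) (s0 : R) (xs : nat -> X) (ys : nat -> R).
Hypothesis psd_k0 : psd_kernel k0.
Local Notation kn n := (gp_post mu0 k0 s0 xs ys n).2.

Lemma gp_post_kernelS n a b : kn n.+1 a b =
  kn n a b - kn n a (xs n) * kn n (xs n) b / (kn n (xs n) (xs n) + s0 ^+ 2).
Proof. by rewrite /=; case: (gp_post mu0 k0 s0 xs ys n). Qed.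

Lemma gp_post_psd n : psd_kernel (kn n).
Proof.
elim: n => [//|n IHn].
have -> : kn n.+1 = fun a b =>
    kn n a b - kn n a (xs n) * kn n (xs n) b / (kn n (xs n) (xs n) + s0 ^+ 2).
  by apply/funext => a; apply/funext => b; exact: gp_post_kernelS.
exact: psd_kernel_condition.
Qed.

Lemma gp_post_var_ge0 n a : 0 <= kn n a a.
Proof. exact/psd_kernel_diag_ge0/gp_post_psd. Qed.

Lemma gp_post_varS_le n a : kn n.+1 a a <= kn n a a.
Proof.
have [ksym _] := gp_post_psd n.
rewrite gp_post_kernelS gerBl (ksym (xs n) a) -expr2.
by rewrite divr_ge0 ?addr_ge0 ?gp_post_var_ge0 ?sqr_ge0.
Qed.

Lemma gp_post_var_nonincreasing a n m : (n <= m)%N -> kn m a a <= kn n a a.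
Proof.
apply: (homo_leq (f := fun n => kn n a a) (r := fun u v => v <= u)) => // [u v w|i].
  by move=> vu wv; exact: le_trans wv vu.
exact: gp_post_varS_le.
Qed.

Lemma gp_post_var_le_prior n a : kn n a a <= k0 a a.
Proof. exact: (gp_post_var_nonincreasing a (leq0n n)). Qed.

Lemma gp_post_var_sampleS n (c : R) : kn n (xs n) (xs n) * c <= s0 ^+ 2 ->
  kn n.+1 (xs n) (xs n) * (c + 1) <= s0 ^+ 2.
Proof.
rewrite gp_post_kernelS; apply: conditioned_var_precision.
  exact: gp_post_var_ge0.
exact: sqr_ge0.
Qed.

Lemma gp_post_var_count x : (forall N, exists m, (N <= m)%N /\ xs m = x) ->
  forall c : nat, exists N, forall n, (N <= n)%N -> kn n x x * c%:R <= s0 ^+ 2.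
Proof.
move=> sampled; elim=> [|c [N Nc]]; first by exists 0%N => n _; rewrite mulr0 sqr_ge0.
have [m [Nm xm]] := sampled N.
have := @gp_post_var_sampleS m c%:R; rewrite xm => /(_ (Nc m Nm)) sampled_m.
exists m.+1 => n mn; rewrite -natr1; apply: le_trans sampled_m.
by rewrite ler_wpM2r ?addr_ge0 ?gp_post_var_nonincreasing.
Qed.

Lemma gp_post_var_cvg0 x : (forall N, exists m, (N <= m)%N /\ xs m = x) ->
  kn n x x @[n --> \oo] --> 0.
Proof.
move=> /gp_post_var_count count; apply/cvgrPdist_le => e e0.
pose c := (Num.truncn (s0 ^+ 2 / e)).+1.
have c0 : 0 < c%:R :> R by rewrite ltr0n.
have s2ce : s0 ^+ 2 / c%:R <= e.
  by rewrite ler_pdivrMr // mulrC -ler_pdivrMr // ltW // truncnS_gt.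
have [N Nc] := count c; near=> n.
rewrite sub0r normrN ger0_norm ?gp_post_var_ge0 //; apply: le_trans s2ce.
by rewrite ler_pdivlMr // Nc //; near: n; exists N.
Unshelve. all: end_near. Qed.

End posterior.

Section affine_integral.
Context d (T : measurableType d) (R : realType) (P : probability T R).
Local Open Scope ereal_scope.

Lemma integrable_affine (f : T -> R) (c e : R) :
  P.-integrable [set: T] (EFin \o f) ->
  P.-integrable [set: T] (fun x => (c + e * f x)%:E).
Proof.
move=> intf; have intc := finite_measure_integrable_cst P c measurableT.
by apply: eq_integrable (integrableD measurableT intc (integrableZl measurableT e intf)).
Qed.

Lemma integral_affine (f : T -> R) (c e : R) :
  P.-integrable [set: T] (EFin \o f) ->
  \int[P]_(x in [set: T]) (c + e * f x)%:E
    = c%:E + e%:E * \int[P]_(x in [set: T]) (f x)%:E.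
Proof.
move=> intf; under eq_integral do rewrite EFinD EFinM.
rewrite integralD //; last exact: integrableZl.
  rewrite integralZl // integral_cst // -[c%:E in RHS]mule1.
  by congr (_ * _ + _); exact: probability_setT.
exact: finite_measure_integrable_cst.
Qed.

End affine_integral.

Section standard_normal.
Context {R : realType}.
Local Notation mu := (@lebesgue_measure R).
Local Notation P := (@normal_prob R 0 1).
Local Notation phi := (@normal_pdf R 0 1).

Lemma normal_pdf0E (s x : R) : s != 0 ->
  normal_pdf 0 s x = normal_peak s * expR (- x ^+ 2 / (s ^+ 2 *+ 2)).
Proof. by move=> s0; rewrite normal_pdfE // /normal_fun subr0. Qed.

Lemma normal_pdfN1 (x : R) : phi (- x) = phi x.
Proof. by rewrite normal_pdfE ?oner_neq0 //= /normal_fun !subr0 sqrrN. Qed.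

Lemma norm_expR_sqr_le (x : R) : `|x| * expR (- x ^+ 2 / 2) <= expR (- x ^+ 2 / 8).
Proof.
have -> : - x ^+ 2 / 8 = - x ^+ 2 / 2 + 3 * x ^+ 2 / 8 by field.
rewrite expRD mulrC ler_pM2l ?expR_gt0 //; apply: le_trans (expR_ge1Dx _).
have : 0 <= (`|x| / 2 - 1) ^+ 2 by exact: sqr_ge0.
by rewrite -[x ^+ 2]real_normK ?num_real //; nra.
Qed.

(* [|x| phi(x)] is dominated by a multiple of the density of [N(0, 2^2)]. *)
Definition normal_abs_moment_ub : R := normal_peak 1 / normal_peak 2.

Lemma normal_abs_moment_ub_ge0 : 0 <= normal_abs_moment_ub.
Proof. by rewrite divr_ge0 ?normal_peak_ge0. Qed.

Local Open Scope ereal_scope.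

Lemma ge0_integral_normal_prob (g : R -> \bar R) :
  (forall x, 0 <= g x) -> measurable_fun [set: R] g ->
  \int[P]_(x in [set: R]) g x = \int[mu]_x (g x * (phi x)%:E).
Proof.
move=> g0 mg; have dom := @normal_prob_dominates R 0 1.
have mphi : measurable_fun [set: R] (EFin \o phi).
  by apply/measurable_EFinP; exact: measurable_normal_pdf.
rewrite -(Radon_Nikodym_SigmaFinite.change_of_variables dom) //.
apply: ge0_ae_eq_integral => //.
- apply: emeasurable_funM => //; apply: measurable_int.
  exact: Radon_Nikodym_SigmaFinite.f_integrable.
- exact: emeasurable_funM.
- by move=> x _; rewrite mule_ge0 // Radon_Nikodym_SigmaFinite.f_ge0.
- by move=> x _; rewrite mule_ge0 // lee_fin normal_pdf_ge0.
apply: ae_eqe_mul2l; apply: integral_ae_eq => //.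
- exact: Radon_Nikodym_SigmaFinite.f_integrable.
- by move=> E _ mE; rewrite -Radon_Nikodym_SigmaFinite.f_integral.
Qed.

Lemma continuous_ge0_integral_compN (g : R -> R) :
  (forall x, 0 <= g x)%R -> continuous g ->
  \int[mu]_x (g (- x))%:E = \int[mu]_x (g x)%:E.
Proof.
have halves (f : R -> R) : (forall x, 0 <= f x)%R -> continuous f ->
    \int[mu]_x (f x)%:E = \int[mu]_(x in `[0%R, +oo[) (f x)%:E
                          + \int[mu]_(x in `[0%R, +oo[) (f (- x))%:E.
  move=> f0 cf; have mf : measurable_fun [set: R] f := continuous_measurable_fun cf.
  rewrite -(setUv `[0%R, +oo[%classic) ge0_integral_setU //=; last 4 first.
  - exact: measurableC.
  - by apply/measurable_EFinP; rewrite setUv.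
  - by move=> x _; rewrite lee_fin.
  - exact/disj_setPCl.
  congr +%E; rewrite setCitvr integral_itv_bndo_bndc; last first.
    exact/measurable_EFinP/measurable_funTS.
  rewrite -{1}oppr0 ge0_integration_by_substitutionNy //.
  exact: continuous_subspaceT.
move=> g0 cg; have cgN : continuous (fun x : R => g (- x)%R).
  by move=> x; apply: continuous_comp; [exact: continuousN | exact: cg].
rewrite halves // [RHS]halves // addeC; congr +%E.
by apply: eq_integral => x _; rewrite opprK.
Qed.

Lemma continuous_ge0_integral_normal_prob_compN (g : R -> R) :
  (forall x, 0 <= g x)%R -> continuous g ->
  \int[P]_(x in [set: R]) (g (- x))%:E = \int[P]_(x in [set: R]) (g x)%:E.
Proof.
move=> g0 cg; have cgN : continuous (fun x : R => g (- x)%R).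
  by move=> x; apply: continuous_comp; [exact: continuousN | exact: cg].
rewrite !ge0_integral_normal_prob //; try by move=> ?; rewrite lee_fin.
- under eq_integral do rewrite -EFinM -normal_pdfN1.
  under [RHS]eq_integral do rewrite -EFinM.
  apply: (continuous_ge0_integral_compN (g := fun x => g x * phi x)%R).
    by move=> x; rewrite mulr_ge0 // normal_pdf_ge0.
  move=> x; apply: continuousM; first exact: cg.
  exact: continuous_normal_pdf (oner_neq0 R) x.
- by apply/measurable_EFinP; exact: continuous_measurable_fun.
- by apply/measurable_EFinP; exact: continuous_measurable_fun.
Qed.

Lemma integral_normal_prob_abs_le :
  \int[P]_(x in [set: R]) (`|x|%R)%:E <= normal_abs_moment_ub%:E.
Proof.
have mabs : measurable_fun [set: R] (fun x : R => (`|x|%R)%:E).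
  by apply/measurable_EFinP; exact: normr_measurable.
have mphi2 : measurable_fun [set: R] (EFin \o normal_pdf 0 2).
  by apply/measurable_EFinP; exact: measurable_normal_pdf.
rewrite ge0_integral_normal_prob //.
apply: (@le_trans _ _ (\int[mu]_x (normal_abs_moment_ub%:E * (normal_pdf 0 2 x)%:E))).
  apply: ge0_le_integral => //.
  - by move=> x _; rewrite -EFinM lee_fin mulr_ge0 // normal_pdf_ge0.
  - apply: emeasurable_funM => //.
    by apply/measurable_EFinP; exact: measurable_normal_pdf.
  - by apply: emeasurable_funM.
  move=> x _; rewrite -!EFinM lee_fin !normal_pdf0E ?oner_neq0 ?pnatr_eq0 //.
  have -> : (1 ^+ 2 *+ 2 = 2 :> R)%R by rewrite expr1n.
  have -> : (2 ^+ 2 *+ 2 = 8 :> R)%R by rewrite -mulr_natr; lra.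
  rewrite /normal_abs_moment_ub [X in (_ <= X)%R]mulrA divfK; last first.
    by rewrite gt_eqF ?normal_peak_gt0 ?pnatr_eq0.
  by rewrite mulrCA ler_pM2l ?normal_peak_gt0 ?oner_neq0 // norm_expR_sqr_le.
rewrite ge0_integralZl //; last exact/normal_abs_moment_ub_ge0.
- by rewrite integral_normal_pdf mule1.
- by move=> x _; rewrite lee_fin normal_pdf_ge0.
Qed.

Lemma integrable_normal_prob_abs : P.-integrable [set: R] (fun x => (`|x|%R)%:E).
Proof.
apply/integrableP; split; first by apply/measurable_EFinP; exact: normr_measurable.
under eq_integral do rewrite abse_EFin normr_id.
exact: le_lt_trans integral_normal_prob_abs_le (ltry _).
Qed.

Lemma integrable_normal_prob_id : P.-integrable [set: R] (fun x => x%:E).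
Proof.
apply: le_integrable integrable_normal_prob_abs => //.
  by apply/measurable_EFinP; exact: measurable_id.
by move=> x _; rewrite /= normr_id.
Qed.

Lemma integral_normal_prob_id : \int[P]_(x in [set: R]) x%:E = 0.
Proof.
(* [x = pos x - pos (- x)], and [pos x], [pos (- x)] have the same law *)
pose pos (x : R) := ((`|x| + x) / 2)%R.
have pos_ge0 x : (0 <= pos x)%R.
  by rewrite /pos divr_ge0 // -[X in (_ <= _ + X)%R]opprK subr_ge0 ler_normr lexx orbT.
have cpos : continuous pos.
  rewrite /pos => x; apply: cvgM; last exact: cvg_cst.
  by apply: cvgD; [exact: norm_continuous | exact: cvg_id].
have intpos (f : R -> R) : (forall x, `|f x| <= `|x|)%R ->
    measurable_fun [set: R] f -> P.-integrable [set: R] (EFin \o f).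
  move=> fx mf; apply: le_integrable integrable_normal_prob_abs => //.
    exact/measurable_EFinP.
  by move=> x _; rewrite /= normr_id lee_fin.
have posx x : (`|pos x| <= `|x|)%R.
  by rewrite ger0_norm // /pos ler_pdivrMr // mulr_natr mulr2n lerD2l ler_norm.
have posNx x : (`|pos (- x)| <= `|x|)%R by rewrite -[`|x|%R]normrN posx.
have mpos : measurable_fun [set: R] pos := continuous_measurable_fun cpos.
have mposN : measurable_fun [set: R] (fun x => pos (- x)%R).
  by apply: continuous_measurable_fun => x; apply: continuous_comp;
    [exact: continuousN | exact: cpos].
have -> : \int[P]_(x in [set: R]) x%:E
    = \int[P]_(x in [set: R]) ((pos x)%:E - (pos (- x)%R)%:E).
  by apply: eq_integral => x _; rewrite -EFinB /pos normrN; congr EFin; field.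
rewrite integralB //; [|exact: intpos|exact: intpos].
rewrite continuous_ge0_integral_normal_prob_compN // subee //.
exact/integrable_fin_num/intpos.
Qed.

End standard_normal.

Definition max_affine {R : realType} (n : nat) (a b : 'I_n -> R) (z : R) : \bar R :=
  (\big[maxe/-oo]_(j < n) (a j + b j * z)%:E)%E.

Section expected_max_affine.
Context {R : realType} (n : nat).
Hypothesis n_gt0 : (0 < n)%N.
Implicit Types (a b f : 'I_n -> R) (S z : R).
Local Notation P := (@normal_prob R 0 1).
Local Open Scope ereal_scope.

Lemma bigmaxe_EFin_attained f : exists j0, \big[maxe/-oo]_(j < n) (f j)%:E = (f j0)%:E.
Proof.
have [j0 _ ->] := @eq_bigmax _ _ _ -oo (Ordinal n_gt0) predT (fun j => (f j)%:E) isT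
  (fun i _ => leNye _).
by exists j0.
Qed.

Lemma max_affine_bounds a b S z (j0 : 'I_n) :
  (forall j, a j <= a j0)%R -> (forall j, `|b j| <= S)%R ->
  (a j0 + b j0 * z)%:E <= max_affine a b z <= (a j0 + S * `|z|)%:E.
Proof.
move=> aj0 bS; apply/andP; split; first exact: (le_bigmax _ _ j0).
apply: bigmax_le => [|j _]; first exact: leNye.
rewrite lee_fin lerD ?aj0 //; apply: le_trans (ler_norm _) _.
by rewrite normrM ler_wpM2r.
Qed.

Lemma measurable_max_affine a b : measurable_fun [set: R] (max_affine a b).
Proof.
rewrite /max_affine; elim: (index_enum _) => [|j r IHr].
  by under eq_fun do rewrite big_nil; exact: measurable_cst.
under eq_fun do rewrite big_cons; apply: measurable_maxe => //.
by apply/measurable_EFinP; apply: measurable_funD.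
Qed.

Lemma integrable_max_affine a b : P.-integrable [set: R] (max_affine a b).
Proof.
have [j0 a_j0] := bigmaxe_EFin_attained a.
have aj0 j : (a j <= a j0)%R by rewrite -lee_fin -a_j0; exact: le_bigmax.
pose S := (\sum_(j < n) `|b j|)%R.
have bS j : (`|b j| <= S)%R by rewrite /S (bigD1 j) //= lerDl sumr_ge0.
apply: le_integrable (integrable_affine `|a j0| S integrable_normal_prob_abs) => //.
  exact: measurable_max_affine.
move=> z _; have [j1 Fz] := bigmaxe_EFin_attained (fun j => a j + b j * z)%R.
have /andP[] := max_affine_bounds z aj0 bS; rewrite /max_affine Fz !lee_fin => lo up.
have bzS : (`|b j0 * z| <= S * `|z|)%R by rewrite normrM ler_wpM2r.
have := ler_norm (b j0 * z); have := ler_norm (- (b j0 * z)); rewrite normrN.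
have := ler_norm (a j0); have := ler_norm (- a j0); rewrite normrN.
have c0 : (0 <= `|a j0| + S * `|z|)%R by rewrite addr_ge0 ?mulr_ge0 ?sumr_ge0.
rewrite /= (ger0_norm c0) ler_norml.
by move=> *; apply/andP; split; lra.
Qed.

Lemma expected_max_affine_ge a b :
  \big[maxe/-oo]_(j < n) (a j)%:E <= \int[P]_(z in [set: R]) max_affine a b z.
Proof.
have [j0 ->] := bigmaxe_EFin_attained a.
have intz := integrable_normal_prob_id (R := R).
have <- : \int[P]_(z in [set: R]) (a j0 + b j0 * z)%:E = (a j0)%:E.
  by rewrite integral_affine // integral_normal_prob_id mule0 adde0.
apply: le_integral => //; first exact: integrable_affine.
  exact: integrable_max_affine.
by move=> z _; exact: (le_bigmax _ _ j0).
Qed.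

Lemma expected_max_affine_le a b S : (forall j, `|b j| <= S)%R ->
  \int[P]_(z in [set: R]) max_affine a b z
    <= \big[maxe/-oo]_(j < n) (a j)%:E + (S * normal_abs_moment_ub)%:E.
Proof.
move=> bS; have [j0 a_j0] := bigmaxe_EFin_attained a.
have aj0 j : (a j <= a j0)%R by rewrite -lee_fin -a_j0; exact: le_bigmax.
have S0 : (0 <= S)%R := le_trans (normr_ge0 _) (bS (Ordinal n_gt0)).
have intz := integrable_normal_prob_abs (R := R).
apply: (@le_trans _ _ (\int[P]_(z in [set: R]) (a j0 + S * `|z|)%:E)).
  apply: le_integral => //; [exact: integrable_max_affine | exact: integrable_affine|].
  by move=> z _; have /andP[] := max_affine_bounds z aj0 bS.
rewrite integral_affine // a_j0 EFinM leeD2l // lee_wpmul2l ?lee_fin //.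
exact: integral_normal_prob_abs_le.
Qed.

End expected_max_affine.

Lemma sigt_norm_le {R : realType} {X : Type} (k : X -> X -> R) (s0 : R) (x x' : X)
    (B : R) : psd_kernel k -> 0 < s0 -> k x' x' <= B ->
  `|sigt k s0 x x'| <= Num.sqrt (B * k x x) / s0.
Proof.
move=> psdk s0_gt0 kB; have kxx := psd_kernel_diag_ge0 x psdk.
have d_gt0 : 0 < Num.sqrt (k x x + s0 ^+ 2).
  by rewrite sqrtr_gt0 ltr_wpDl // exprn_gt0.
rewrite /sigt normrM normfV (gtr0_norm d_gt0).
apply: ler_pM; rewrite ?invr_ge0 ?sqrtr_ge0 //.
  apply: le_trans (psd_kernel_normCS x' x psdk) _.
  by rewrite ler_wsqrtr // ler_wpM2r.
rewrite lef_pV2 ?posrE // -{1}[s0](@gtr0_norm _ s0) // -sqrtr_sqr.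
by rewrite ler_wsqrtr // lerDr.
Qed.

Section KGh_bounds.
Context {R : realType} {X : Type} (nz : nat) (mu : X -> R) (k : X -> X -> R) (s0 : R).
Variables (xstar : 'I_nz -> X) (x : X).
Hypothesis nz_gt0 : (0 < nz)%N.
Local Open Scope ereal_scope.

Let max_mu_fin_num : \big[maxe/-oo]_(j < nz) (mu (xstar j))%:E \is a fin_num.
Proof. by have [j0 ->] := bigmaxe_EFin_attained nz_gt0 (fun j => mu (xstar j)). Qed.

Lemma KGh_ge0 : 0 <= KGh mu k s0 xstar x.
Proof. by rewrite /KGh sube_ge0 ?max_mu_fin_num //; exact: expected_max_affine_ge. Qed.

Lemma KGh_le (S : R) : (forall j, `|sigt k s0 x (xstar j)| <= S)%R ->
  KGh mu k s0 xstar x <= (S * normal_abs_moment_ub)%:E.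
Proof.
by move=> sigtS; rewrite /KGh leeBlDl ?max_mu_fin_num //; exact: expected_max_affine_le.
Qed.

End KGh_bounds.

Theorem theorem3 (R : realType) (X : Type) (mu0 : X -> R) (k0 : X -> X -> R)
  (s0 : R) (nz : nat) (Zs : 'I_nz -> R) (xseq : nat -> X) (yseq : nat -> R) :
  0 < s0 ->
  psd_kernel k0 ->
  (exists B : R, forall x : X, k0 x x <= B) ->
  (1 < nz)%N ->
  injective Zs ->
  (exists j, Zs j = 0) ->
  (* (i) nonnegativity, for every n, every candidate x and every choice of maximizers *)
  (forall (n : nat) (x : X) (xstar : 'I_nz -> X),
     (forall j, is_argmax (gp_post mu0 k0 s0 xseq yseq n).1
                          (gp_post mu0 k0 s0 xseq yseq n).2 s0 x (Zs j) (xstar j)) ->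
     (0 <= KGh (gp_post mu0 k0 s0 xseq yseq n).1 (gp_post mu0 k0 s0 xseq yseq n).2
               s0 xstar x)%E)
  /\
  (* (ii) if x is sampled infinitely often, KG_h at x tends to 0 *)
  (forall (x : X) (xstar : nat -> 'I_nz -> X),
     (forall N, exists m, (N <= m)%N /\ xseq m = x) ->
     (forall n j, is_argmax (gp_post mu0 k0 s0 xseq yseq n).1
                            (gp_post mu0 k0 s0 xseq yseq n).2 s0 x (Zs j) (xstar n j)) ->
     (fun n => KGh (gp_post mu0 k0 s0 xseq yseq n).1 (gp_post mu0 k0 s0 xseq yseq n).2
                   s0 (xstar n) x) @ \oo --> 0%E).
Proof.
(* The bounds hold for any [xstar], maximizing or not; of the assumptions on [nz] and
   [Zs] only [0 < nz] is needed. *)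
move=> s0_gt0 psd_k0 [B k0B] /ltnW nz_gt0 _ _.
pose kn n := (gp_post mu0 k0 s0 xseq yseq n).2.
have sigt_le n x j (xstar : 'I_nz -> X) :
    `|sigt (kn n) s0 x (xstar j)| <= Num.sqrt (B * kn n x x) / s0.
  apply: sigt_norm_le (gp_post_psd _ _ _ _ psd_k0 n) s0_gt0 _.
  exact: le_trans (gp_post_var_le_prior _ _ _ _ psd_k0 _ _) (k0B _).
split=> [n x xstar _|x xstar sampled _]; first exact: KGh_ge0.
apply: (squeeze_cvge (f := cst 0%E)
  (h := fun n => (Num.sqrt (B * kn n x x) / s0 * normal_abs_moment_ub)%:E)).
- by apply: nearW => n; rewrite /cst KGh_ge0 //= KGh_le // => j; exact: sigt_le.
- exact: cvg_cst.
have -> : 0%E = (Num.sqrt (B * 0) / s0 * normal_abs_moment_ub)%:E.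
  by rewrite mulr0 sqrtr0 !mul0r.
apply: continuous_cvg => //.
apply: cvgM; [apply: cvgM; [|exact: cvg_cst] | exact: cvg_cst].
apply: continuous_cvg; first exact: sqrt_continuous.
by apply: cvgM; [exact: cvg_cst | exact: gp_post_var_cvg0].
Qed.
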